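(* Let $P$ be a finite poset and $k\in\mathbb{N}$, and let $\mathcal{A}_k(P)$ be the set of antichains of $P$ of cardinality $k$. For $A,B\in\mathcal{A}_k(P)$ write $A\prec_k B$ if $A\setminus B=\{a\}$ and $B\setminus A=\{b\}$ are singletons with $a<_P b$, and let $\le_k$ be the reflexive transitive closure of $\prec_k$. Also let $\le_J$ be the relation on antichains given by $A\le_J B$ iff for every $a\in A$ there is $b\in B$ with $a\le_P b$. Then: (i) $\le_k$ is a partial order on $\mathcal{A}_k(P)$; (ii) the restriction of $\le_J$ to $\mathcal{A}_k(P)$ refines $\le_k$, i.e. $A\le_k B$ implies $A\le_J B$; (iii) if $A\le_k B$, then the elements of $A$ and $B$ can be labelled $A=\{a_1,\dots,a_k\}$, $B=\{b_1,\dots,b_k\}$ so that $a_i\le_P b_i$ for all $1\le i\le k$; (iv) $B$ covers $A$ in $(\mathcal{A}_k(P),\le_k)$ if and only if $A\prec_k B$ and the unique elements $a\in A\setminus B$ and $b\in B\setminus A$ satisfy $a\lessdot_P b$ (i.e. $b$ covers $a$ in $P$).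
   Context: An antichain is a set of pairwise incomparable elements. The relation $\le_J$ is the order on antichains induced from inclusion of the order ideals they generate. *)

From HB Require Import structures.
From mathcomp Require Import all_boot all_order.
Set Implicit Arguments. Unset Strict Implicit. Unset Printing Implicit Defensive.
Import Order.Theory.
Local Open Scope order_scope.

Section Antichains.
Context {disp : Order.disp_t} {T : finPOrderType disp}.

Definition antichain (A : {set T}) : bool :=
  [forall x in A, forall y in A, (x != y) ==> ~~ (x >=< y)].

Definition antichain_k (k : nat) (A : {set T}) : bool :=
  antichain A && (#|A| == k).

Definition prec_k (k : nat) (A B : {set T}) : bool :=
  [&& antichain_k k A, antichain_k k B &
   [exists a : T, exists b : T,
      [&& A :\: B == [set a], B :\: A == [set b] & a < b]]].

Definition le_k (k : nat) (A B : {set T}) : bool := connect (prec_k k) A B.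

Definition le_J (A B : {set T}) : bool :=
  [forall a in A, exists b in B, a <= b].

Definition covers_P (a b : T) : bool :=
  (a < b) && [forall c : T, ~~ ((a < c) && (c < b))].

Definition covers_k (k : nat) (A B : {set T}) : bool :=
  [&& antichain_k k A, antichain_k k B, le_k k A B, A != B &
   [forall C : {set T},
      ~~ [&& antichain_k k C, le_k k A C, le_k k C B, C != A & C != B]]].

End Antichains.

From HB Require Import structures.
From mathcomp Require Import all_boot all_order.
Import Order.Theory.

Set Implicit Arguments.
Unset Strict Implicit.
Unset Printing Implicit Defensive.
Local Open Scope order_scope.

(* A step A <_k B replaces one element a of A by some b > a.  It strictly
   increases the weight sum_(x in A) #|[set y | y < x]|, so <=_k is antisymmetric;
   it gives A <=_J B; and replacing b by a in a labelling of B labels A.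
   For covers: if a < c < b, then (A :&: B) :|: [set c] is an antichain strictly
   between A and B.  Conversely, any C with A <=_k C <=_k B has A <=_J C <=_J B,
   hence contains the antichain A :&: B and is (A :&: B) :|: [set c] with
   a <= c <= b. *)

Lemma connect_ind (U : finType) (e : rel U) (P : U -> Prop) (z : U) :
  P z -> (forall x y, e x y -> P y -> P x) -> forall x, connect e x z -> P x.
Proof.
move=> Pz Pe x /connectP [p]; elim: p x => [|y p IHp] x /=; first by move=> _ <-.
by case/andP=> exy ep lastz; apply: Pe exy _; apply: IHp.
Qed.

Section AntichainPoset.
Context {disp : Order.disp_t} {T : finPOrderType disp}.
Implicit Types (A B C S : {set T}) (a b c x y : T) (k : nat).

Lemma antichainP A :
  reflect {in A &, forall x y, x <= y -> x = y} (antichain A).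
Proof.
apply: (iffP forall_inP) => [anti x y xA yA le_xy | anti x xA].
  move/forall_inP/(_ y yA): (anti x xA).
  by case: eqVneq => // _; rewrite /Order.comparable le_xy.
apply/forall_inP => y yA; apply/implyP => neq_xy.
apply/negP => /orP [] le; first by rewrite (anti x y) ?eqxx in neq_xy.
by rewrite (anti y x) ?eqxx in neq_xy.
Qed.

Lemma setU1DU1 S a b : a \notin S -> a != b -> (a |: S) :\: (b |: S) = [set a].
Proof.
move=> aS neq_ab; apply/setP => t; rewrite !inE.
case: (eqVneq t a) => [->|_] /=; first by rewrite (negbTE aS) (negbTE neq_ab).
by case: (t \in S); rewrite ?orbT ?andbF ?andbT.
Qed.

Lemma setD_set1E A B a : A :\: B = [set a] -> A = a |: (A :&: B) /\ a \notin A :&: B.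
Proof.
move/setP=> AB; split.
  by apply/setP => t; move: (AB t); rewrite !inE => <-; case: (t \in A); case: (t \in B).
by move: (AB a); rewrite !inE eqxx; case: (a \in A); case: (a \in B).
Qed.

Lemma prec_kE k A B : prec_k k A B ->
  exists S a b, [/\ A = a |: S, B = b |: S, a \notin S, b \notin S & a < b].
Proof.
case/and3P=> _ _ /existsP [a /existsP [b /and3P [/eqP AB /eqP BA lt_ab]]].
have [defA aS] := setD_set1E AB; have [defB bS] := setD_set1E BA.
by exists (A :&: B), a, b; rewrite [B :&: A]setIC in defB bS.
Qed.

Lemma prec_k_setU1 k S a b : antichain_k k (a |: S) -> antichain_k k (b |: S) ->
  a \notin S -> b \notin S -> a < b -> prec_k k (a |: S) (b |: S).
Proof.
move=> antiA antiB aS bS lt_ab; rewrite /prec_k antiA antiB.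
apply/existsP; exists a; apply/existsP; exists b.
have [neq_ab neq_ba] : a != b /\ b != a by rewrite lt_eqF // gt_eqF.
by rewrite !setU1DU1 // lt_ab !eqxx.
Qed.

Definition down_weight A : nat := (\sum_(x in A) #|[set y | (y < x)%O]|)%N.

Lemma prec_k_down_weight k A B : prec_k k A B -> (down_weight A < down_weight B)%N.
Proof.
case/prec_kE=> S [a [b [-> -> aS bS lt_ab]]].
rewrite /down_weight !big_setU1 //= ltn_add2r; apply: proper_card.
apply/properP; split; last by exists a; rewrite !inE ?lt_ab ?ltxx.
by apply/subsetP => y; rewrite !inE => /lt_trans; apply.
Qed.

Lemma prec_k_neq k A B : prec_k k A B -> A != B.
Proof. by move/prec_k_down_weight; apply: contraTneq => ->; rewrite ltnn. Qed.

Lemma le_k_down_weight k A B :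
  le_k k A B -> A = B \/ (down_weight A < down_weight B)%N.
Proof.
move: A; apply: connect_ind => [|A C /prec_k_down_weight lt_AC]; first by left.
by case=> [<-|/(ltn_trans lt_AC)]; right.
Qed.

Lemma le_k_anti k A B : le_k k A B -> le_k k B A -> A = B.
Proof.
case/le_k_down_weight=> // lt_AB; case/le_k_down_weight=> // lt_BA.
by have := ltn_trans lt_AB lt_BA; rewrite ltnn.
Qed.

Lemma le_J_trans A B C : le_J A B -> le_J B C -> le_J A C.
Proof.
move=> /forall_inP AB /forall_inP BC; apply/forall_inP => x xA.
have /exists_inP [y yB le_xy] := AB x xA.
have /exists_inP [z zC le_yz] := BC y yB.
by apply/exists_inP; exists z => //; apply: le_trans le_yz.
Qed.

Lemma prec_k_le_J k A B : prec_k k A B -> le_J A B.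
Proof.
case/prec_kE=> S [a [b [-> -> _ _ lt_ab]]].
apply/forall_inP => x; rewrite in_setU1 => /orP [/eqP ->|xS]; apply/exists_inP.
  by exists b; rewrite ?setU11 ?ltW.
by exists x; rewrite ?setU1r.
Qed.

Lemma le_k_le_J k A B : le_k k A B -> le_J A B.
Proof.
move: A; apply: connect_ind => [|A C /prec_k_le_J]; last exact: le_J_trans.
by apply/forall_inP => x xB; apply/exists_inP; exists x.
Qed.

Lemma le_J_setI_subset A B C :
  antichain B -> le_J A C -> le_J C B -> A :&: B \subset C.
Proof.
move=> /antichainP antiB /forall_inP AC /forall_inP CB.
apply/subsetP => x /setIP [xA xB].
have /exists_inP [c cC le_xc] := AC x xA.
have /exists_inP [y yB le_cy] := CB c cC.
have eq_xy : x = y := antiB x y xB yB (le_trans le_xc le_cy).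
suff -> : x = c by [].
by apply: le_anti; rewrite le_xc eq_xy le_cy.
Qed.

Lemma card_labelling A k : #|A| = k ->
  exists f : 'I_k -> T, injective f /\ A = [set f i | i : 'I_k].
Proof.
move=> cardA; pose f (i : 'I_k) := enum_val (cast_ord (esym cardA) i).
exists f; split; first by move=> i j /enum_val_inj /cast_ord_inj.
apply/setP => t; apply/idP/imsetP => [tA|[i _ ->]]; last exact: enum_valP.
by exists (cast_ord cardA (enum_rank_in tA t)); rewrite // /f cast_ordK enum_rankK_in.
Qed.

Lemma relabel_setU1 (I : finType) (f : I -> T) S a b :
  injective f -> b |: S = [set f i | i : I] -> a \notin S -> b \notin S -> a < b ->
  exists f' : I -> T,
    [/\ injective f', a |: S = [set f' i | i : I] & forall i, f' i <= f i].
Proof.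
move=> inj_f defB aS bS lt_ab.
have fB i : f i \in b |: S by rewrite defB imset_f.
have aB : a \notin b |: S by rewrite in_setU1 negb_or (lt_eqF lt_ab).
exists (fun i => if f i == b then a else f i); split.
- move=> i j /=; case: eqVneq => [fib|_]; case: eqVneq => [fjb|_].
  + by move=> _; apply: inj_f; rewrite fib fjb.
  + by move=> eq_a; move: (fB j); rewrite -eq_a (negbTE aB).
  + by move=> eq_a; move: (fB i); rewrite eq_a (negbTE aB).
  + exact: inj_f.
- apply/setP => t; rewrite in_setU1; apply/idP/imsetP.
    case/orP => [/eqP ->|tS].
      have /imsetP [i _ bi] : b \in [set f i | i : I] by rewrite -defB setU11.
      by exists i; rewrite // -bi eqxx.
    have /imsetP [i _ ti] : t \in [set f i | i : I] by rewrite -defB setU1r.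
    by exists i; rewrite // -ti; case: eqVneq => // tb; rewrite -tb tS in bS.
  case=> i _ ->; case: (eqVneq (f i) b) => [_|fib]; first by rewrite eqxx.
  by move: (fB i); rewrite in_setU1 (negbTE fib) /= => ->; rewrite orbT.
- by move=> i; case: eqVneq => [->|_]; rewrite ?lexx ?ltW.
Qed.

Lemma le_k_labelling k A B : le_k k A B -> #|B| = k ->
  exists f g : 'I_k -> T,
    [/\ injective f, injective g, A = [set f i | i : 'I_k],
        B = [set g i | i : 'I_k] & forall i, f i <= g i].
Proof.
move=> le_AB /card_labelling [g [inj_g defB]]; move: A le_AB.
apply: connect_ind => [|A C]; first by exists g, g.
case/prec_kE=> S [a [b [-> -> aS bS lt_ab]]] [f [h [inj_f inj_h defC defB' le_fh]]].
have [f' [inj_f' defA le_f'f]] := relabel_setU1 inj_f defC aS bS lt_ab.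
by exists f', h; split=> // i; apply: le_trans (le_fh i).
Qed.

Lemma le_k_first_step k A B :
  le_k k A B -> A != B -> exists2 C, prec_k k A C & le_k k C B.
Proof.
case/connectP=> [[|C p]] /=; first by move=> _ ->; rewrite eqxx.
by case/andP=> prec_AC path_p lastB _; exists C; last by apply/connectP; exists p.
Qed.

Lemma covers_k_prec k A B : covers_k k A B -> prec_k k A B.
Proof.
case/and5P=> _ _ le_AB neq_AB /forallP noC.
have [C prec_AC le_CB] := le_k_first_step le_AB neq_AB.
case: (eqVneq C B) => [<- //|neq_CB].
have le_AC : le_k k A C := connect1 prec_AC.
have antikC : antichain_k k C by case/and3P: prec_AC.
move: (noC C); rewrite antikC le_AC le_CB neq_CB.
by rewrite eq_sym (prec_k_neq prec_AC).
Qed.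

Lemma antichain_setU1_nge S a y :
  antichain (a |: S) -> a \notin S -> y \in S -> ~~ (a <= y).
Proof.
move=> /antichainP antiA aS yS; apply/negP.
by move=> /(antiA a y (setU11 _ _) (setU1r _ yS)) eq_ay; rewrite eq_ay yS in aS.
Qed.

Lemma antichain_setU1_between S a b c :
  antichain (a |: S) -> antichain (b |: S) -> a \notin S -> a < c -> c < b ->
  c \notin S /\ antichain (c |: S).
Proof.
move=> antiA antiB aS lt_ac lt_cb.
have S_nge_a y : y \in S -> ~~ (a <= y) := antichain_setU1_nge antiA aS.
split; first by apply: contraTN (ltW lt_ac); apply: S_nge_a.
move/antichainP: antiA antiB => antiA /antichainP antiB.
apply/antichainP => x y; rewrite !in_setU1.
case/orP => [/eqP->|xS]; case/orP => [/eqP->|yS] le_xy //.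
- by move: (S_nge_a y yS); rewrite (le_trans (ltW lt_ac) le_xy).
- have /ltW /(antiB x b (setU1r _ xS) (setU11 _ _)) eq_xb := le_lt_trans le_xy lt_cb.
  by move: (S_nge_a x xS); rewrite eq_xb ltW // (lt_trans lt_ac lt_cb).
- exact: antiA (setU1r _ xS) (setU1r _ yS) le_xy.
Qed.

Lemma le_J_setU1_between S a b C :
  antichain (a |: S) -> antichain (b |: S) -> a \notin S -> #|C| = #|S|.+1 ->
  le_J (a |: S) C -> le_J C (b |: S) -> exists2 c, C = c |: S & a <= c <= b.
Proof.
move=> antiA antiB aS cardC le_AC le_CB.
have S_nge_a y : y \in S -> ~~ (a <= y) := antichain_setU1_nge antiA aS.
have sub_SC : S \subset C.
  apply: subset_trans (le_J_setI_subset antiB le_AC le_CB).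
  by rewrite subsetI !subsetUr.
have /subsetPn [c cC cS] : ~~ (C \subset S).
  by apply: contraL (leqnn #|C|) => /subset_leq_card; rewrite cardC ltnNge.
have defC : C = c |: S.
  apply/eqP; rewrite eq_sym eqEcard cardsU1 cS cardC leqnn andbT.
  by rewrite subUset sub1set cC sub_SC.
exists c => //; move/forall_inP: le_AC => /(_ a (setU11 _ _)) /exists_inP [x].
rewrite defC in_setU1 => /orP [/eqP -> le_ac|xS le_ax]; last first.
  by move: (S_nge_a x xS); rewrite le_ax.
move/forall_inP: le_CB => /(_ c cC) /exists_inP [y].
rewrite in_setU1 => /orP [/eqP -> ->|yS le_cy]; first by rewrite le_ac.
by move: (S_nge_a y yS); rewrite (le_trans le_ac le_cy).
Qed.

Lemma covers_k_setU1_covers_P k S a b :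
  covers_k k (a |: S) (b |: S) -> a \notin S -> b \notin S -> a < b -> covers_P a b.
Proof.
case/and5P=> antikA antikB _ _ /forallP noC aS bS lt_ab.
rewrite /covers_P lt_ab; apply/forallP => c; apply/negP => /andP [lt_ac lt_cb].
case/andP: (antikA) (antikB) => antiA _ /andP [antiB _].
have [cS antiC] := antichain_setU1_between antiA antiB aS lt_ac lt_cb.
have antikC : antichain_k k (c |: S).
  by case/andP: antikA => _; rewrite /antichain_k antiC !cardsU1 aS cS.
have prec_AC : prec_k k (a |: S) (c |: S) by apply: prec_k_setU1.
have prec_CB : prec_k k (c |: S) (b |: S) by apply: prec_k_setU1.
have le_AC : le_k k (a |: S) (c |: S) := connect1 prec_AC.
have le_CB : le_k k (c |: S) (b |: S) := connect1 prec_CB.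
move: (noC (c |: S)); rewrite antikC le_AC le_CB (prec_k_neq prec_CB).
by rewrite eq_sym (prec_k_neq prec_AC).
Qed.

Lemma covers_P_covers_k_setU1 k S a b :
  prec_k k (a |: S) (b |: S) -> a \notin S -> covers_P a b ->
  covers_k k (a |: S) (b |: S).
Proof.
move=> prec_AB aS /andP [_ /forallP cov_ab].
have le_AB : le_k k (a |: S) (b |: S) := connect1 prec_AB.
case/and3P: (prec_AB) => antikA antikB _.
rewrite /covers_k antikA antikB le_AB (prec_k_neq prec_AB) /=.
apply/forallP => C; apply/negP => /and5P [antikC le_AC le_CB neq_CA neq_CB].
case/andP: antikA antikB antikC => antiA /eqP cardA /andP [antiB _] /andP [_ /eqP cardC].
have cardCS : #|C| = #|S|.+1 by rewrite cardC -cardA cardsU1 aS.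
have [c defC /andP [le_ac le_cb]] :=
  le_J_setU1_between antiA antiB aS cardCS (le_k_le_J le_AC) (le_k_le_J le_CB).
rewrite defC in neq_CA neq_CB.
have neq_ac : a != c by apply: contraNneq neq_CA => ->.
have neq_cb : c != b by apply: contraNneq neq_CB => ->.
by move: (cov_ab c); rewrite !lt_neqAle neq_ac neq_cb le_ac le_cb.
Qed.

Lemma covers_kP k A B :
  covers_k k A B <->
  prec_k k A B /\
  exists a b, [/\ A :\: B = [set a], B :\: A = [set b] & covers_P a b].
Proof.
split=> [covAB | [prec_AB [a' [b' [AB BA cov_ab]]]]].
  have prec_AB := covers_k_prec covAB; split=> //.
  have [S [a [b [defA defB aS bS lt_ab]]]] := prec_kE prec_AB; subst A B.
  have [neq_ab neq_ba] : a != b /\ b != a by rewrite lt_eqF // gt_eqF.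
  exists a, b; rewrite !setU1DU1 //; split=> //.
  exact: covers_k_setU1_covers_P covAB aS bS lt_ab.
have [S [a [b [defA defB aS bS lt_ab]]]] := prec_kE prec_AB; subst A B.
have [neq_ab neq_ba] : a != b /\ b != a by rewrite lt_eqF // gt_eqF.
move: AB BA; rewrite !setU1DU1 // => /set1_inj eq_a /set1_inj eq_b; subst a' b'.
exact: covers_P_covers_k_setU1.
Qed.

End AntichainPoset.

Theorem proposition2p2 (disp : Order.disp_t) (T : finPOrderType disp) (k : nat) :
  (* (i) le_k is a partial order on A_k(P) *)
  ((forall A : {set T}, antichain_k k A -> le_k k A A) /\
   (forall A B C : {set T}, antichain_k k A -> antichain_k k B -> antichain_k k C ->
      le_k k A B -> le_k k B C -> le_k k A C) /\
   (forall A B : {set T}, antichain_k k A -> antichain_k k B ->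
      le_k k A B -> le_k k B A -> A = B)) /\
  (* (ii) le_J refines le_k *)
  (forall A B : {set T}, antichain_k k A -> antichain_k k B ->
      le_k k A B -> le_J A B) /\
  (* (iii) matching labelling *)
  (forall A B : {set T}, antichain_k k A -> antichain_k k B -> le_k k A B ->
      exists (f g : 'I_k -> T),
        [/\ injective f, injective g, A = [set f i | i : 'I_k],
            B = [set g i | i : 'I_k] & forall i, f i <= g i]) /\
  (* (iv) characterization of covers *)
  (forall A B : {set T}, antichain_k k A -> antichain_k k B ->
      (covers_k k A B <->
      (prec_k k A B /\
       exists a b : T, [/\ A :\: B = [set a], B :\: A = [set b] & covers_P a b]))).
Proof.
split; [split; [|split] | split; [|split]].
- by move=> A _; apply: connect0.
- by move=> A B C _ _ _; apply: connect_trans.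
- by move=> A B _ _; apply: le_k_anti.
- by move=> A B _ _; apply: le_k_le_J.
- by move=> A B _ /andP [_ /eqP cardB]; move/le_k_labelling; apply.
- by move=> A B _ _; apply: covers_kP.
Qed.
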